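(* Let $D$ be a strongly connected digraph with girth $g$ (having at least one cycle), and let $T$ be a DFS tree of $D$ rooted at $r$, of length $t$, with levels $V_0,\ldots,V_t$. Then for each $h$ with $0\le h\le t-g+2$, the set $W_h=\bigcup_{i=0}^{g-2}V_{h+i}$ induces an acyclic subdigraph of $D$, and there is no backward arc with both ends in $W_h$.
   Context: Digraphs are finite and loopless; paths and cycles are directed; $l(\cdot)$ denotes length. Girth is the length of a shortest directed cycle. A DFS tree $T$ of a strongly connected digraph $D$ rooted at $r$ is the spanning out-branching produced by a depth-first search started at $r$. $P_u$ is the unique $ru$-path in $T$; the length $t$ of $T$ is the length of a longest path in $T$; the levels are $V_i=\{u: l(P_u)=i\}$, $0\le i\le t$. An arc $(u,v)$ is a backward arc if $T$ contains a $vu$-path. *)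

From mathcomp Require Import all_boot.
Set Implicit Arguments. Unset Strict Implicit. Unset Printing Implicit Defensive.

(* A digraph on a finite vertex type V is an arc relation e : rel V
   (finite; looplessness is an explicit hypothesis `irreflexive e`). *)

Section Digraphs.
Variable V : finType.

Definition dcycle (e : rel V) (c : seq V) : bool :=
  [&& c != [::], uniq c & cycle e c].

Definition is_girth (e : rel V) (g : nat) : Prop :=
  (exists c, dcycle e c /\ size c = g) /\
  (forall c, dcycle e c -> g <= size c).

Definition strongly_connected (e : rel V) : Prop :=
  forall x y, connect e x y.

(* ---- Depth-first search, as a nondeterministic process ----
   A DFS state is (stack, visited set, tree arcs). *)
Definition dfs_state := (seq V * {set V} * {set V * V})%type.

Inductive dfs_step (e : rel V) : dfs_state -> dfs_state -> Prop :=
| dfs_push (u v : V) (s : seq V) (vis : {set V}) (A : {set V * V}) :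
    e u v -> v \notin vis ->
    dfs_step e (u :: s, vis, A) (v :: u :: s, v |: vis, (u, v) |: A)
| dfs_pop (u : V) (s : seq V) (vis : {set V}) (A : {set V * V}) :
    (forall v, e u v -> v \in vis) ->
    dfs_step e (u :: s, vis, A) (s, vis, A).

Inductive dfs_run (e : rel V) : dfs_state -> dfs_state -> Prop :=
| dfs_run_refl st : dfs_run e st st
| dfs_run_step st1 st2 st3 :
    dfs_step e st1 st2 -> dfs_run e st2 st3 -> dfs_run e st1 st3.

Definition dfs_tree (e : rel V) (r : V) (A : {set V * V}) : Prop :=
  exists vis : {set V},
    dfs_run e ([:: r], [set r], set0) ([::], vis, A).

Definition tarc (A : {set V * V}) : rel V := fun x y => (x, y) \in A.

Definition in_level (A : {set V * V}) (r u : V) (i : nat) : Prop :=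
  exists p : seq V, [/\ path (tarc A) r p, last r p = u & size p = i].

(* A directed path in T: distinct vertices x :: p with consecutive T-arcs;
   its length is the number of arcs, size p. *)
Definition tpath (A : {set V * V}) (x : V) (p : seq V) : bool :=
  path (tarc A) x p && uniq (x :: p).

Definition tree_length (A : {set V * V}) (t : nat) : Prop :=
  (exists x p, tpath A x p /\ size p = t) /\
  (forall x p, tpath A x p -> size p <= t).

Definition backward_arc (e : rel V) (A : {set V * V}) (u v : V) : Prop :=
  e u v /\ connect (tarc A) v u.

Definition inW (A : {set V * V}) (r : V) (g h : nat) (u : V) : Prop :=
  exists i, h <= i <= h + g - 2 /\ in_level A r u i.

End Digraphs.

From mathcomp Require Import all_boot zify.

Set Implicit Arguments. Unset Strict Implicit. Unset Printing Implicit Defensive.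

(* A backward arc (u,v) closes, together with the tree path from v to u, a
   directed cycle, so its length is at least g; since levels in T are unique,
   u then lies at least g - 1 levels below v, which is impossible inside the
   g - 1 consecutive levels of W_h.  For acyclicity, list the vertices in the
   order in which the search finishes them: every arc that is not backward
   leads to a vertex finished earlier.  On W_h all arcs are of this kind, so
   the finishing position strictly decreases along any cycle of W_h, which is
   absurd. *)

Lemma cycle_decreasing_nil (T : Type) (f : T -> nat) (c : seq T) :
  cycle (fun a b => f b < f a) c -> c = [::].
Proof.
case: c => // x p /= /(order_path_min (fun a b c hba hcb => ltn_trans hcb hba)).
by rewrite all_rcons ltnn.
Qed.

Section TreeLevels.
Variables (V : finType) (A : {set V * V}) (r : V).

Lemma in_level_cat v i q :
  in_level A r v i -> path (tarc A) v q -> in_level A r (last v q) (i + size q).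
Proof.
case=> p [pp <- <-] pq; exists (p ++ q).
by rewrite cat_path pp pq last_cat size_cat.
Qed.

Lemma path_last_visited (vis : {set V}) x p :
  (forall y z, tarc A y z -> z \in vis) ->
  x \in vis -> path (tarc A) x p -> last x p \in vis.
Proof.
move=> head_vis; elim: p x => [|y p IHp] x //= _ /andP [xy yp].
exact: IHp (head_vis _ _ xy) yp.
Qed.

Hypothesis root_no_parent : forall x, ~~ tarc A x r.
Hypothesis parent_uniq : forall x x' y, tarc A x y -> tarc A x' y -> x = x'.

Lemma in_level_uniq u i j : in_level A r u i -> in_level A r u j -> i = j.
Proof.
case=> p1 [pp1 <- <-] [p2 [pp2 last12 <-]].
elim/last_ind: p1 p2 pp1 pp2 last12 => [|p1 x IHp] p2;
  case/lastP: p2 => [|p2 y] //; rewrite ?rcons_path ?last_rcons ?size_rcons /=.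
- by move=> _ /andP [_ pr] yr; move: pr; rewrite yr (negbTE (root_no_parent _)).
- by move=> /andP [_ pr] _ xr; move: pr; rewrite -xr (negbTE (root_no_parent _)).
- move=> /andP [pp1 px] /andP [pp2 py] yx; rewrite yx in py.
  by congr S; apply: IHp => //; exact: parent_uniq py px.
Qed.

End TreeLevels.

Lemma girth_gt1 (V : finType) (e : rel V) g :
  irreflexive e -> is_girth e g -> 1 < g.
Proof.
move=> e_irr [[[|x [|y c]] [cyc <-]] _] //.
by move: cyc; rewrite /dcycle /= e_irr.
Qed.

Section BackwardArcs.
Variables (V : finType) (e : rel V) (A : {set V * V}) (r : V).
Hypothesis e_irr : irreflexive e.
Hypothesis tree_sub : subrel (tarc A) e.

Lemma backward_arc_dcycle u v :
  backward_arc e A u v ->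
  exists2 q, dcycle e (v :: q) & path (tarc A) v q /\ last v q = u.
Proof.
case=> uv /connectP [q vq u_last]; move: uv; rewrite u_last.
case/shortenP: vq => q' vq' uq' _ uv.
exists q'; last by split.
rewrite /dcycle uq' /= rcons_path uv andbT.
exact: (sub_path tree_sub vq').
Qed.

Hypothesis root_no_parent : forall x, ~~ tarc A x r.
Hypothesis parent_uniq : forall x x' y, tarc A x y -> tarc A x' y -> x = x'.

Lemma backward_arc_level_gap g u v iu iv :
  is_girth e g -> backward_arc e A u v ->
  in_level A r u iu -> in_level A r v iv -> iv + g <= iu.+1.
Proof.
move=> [_ girth_min] uv lu lv.
have [q cyc [vq last_u]] := backward_arc_dcycle uv; subst u.
have -> : iu = iv + size q.
  exact: (in_level_uniq root_no_parent parent_uniq lu (in_level_cat lv vq)).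
by rewrite -addnS leq_add2l; exact: girth_min cyc.
Qed.

Lemma inW_no_backward_arc g h u v :
  is_girth e g -> backward_arc e A u v -> inW A r g h u -> inW A r g h v -> False.
Proof.
move=> girth uv [iu [/andP [hu ug] lu]] [iv [/andP [hv vg] lv]].
have := backward_arc_level_gap girth uv lu lv.
have := girth_gt1 e_irr girth.
lia.
Qed.

End BackwardArcs.

Section DepthFirstSearch.
Variables (V : finType) (e : rel V) (r : V).

(* [fin] lists the vertices already popped, in the order they were finished. *)
Record dfs_inv (s : seq V) (vis : {set V}) (A : {set V * V}) (fin : seq V) :
    Prop := {
  dfs_tree_sub : subrel (tarc A) e;
  dfs_head_visited : forall x y, tarc A x y -> y \in vis;
  dfs_root_visited : r \in vis;
  dfs_root_no_parent : forall x, ~~ tarc A x r;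
  dfs_parent_uniq : forall x x' y, tarc A x y -> tarc A x' y -> x = x';
  dfs_stack_visited : {subset s <= vis};
  dfs_finished_visited : {subset fin <= vis};
  dfs_visited_stack_finished : forall x, x \in vis -> (x \in s) || (x \in fin);
  dfs_stack_uniq : uniq s;
  dfs_stack_unfinished : forall x, x \in s -> x \notin fin;
  dfs_stack_tree_path : sorted (fun a b => tarc A b a) s;
  dfs_finished_arc : forall x y, x \in fin -> e x y ->
    index y fin < index x fin \/ connect (tarc A) y x }.

Lemma dfs_inv_init : dfs_inv [:: r] [set r] set0 [::].
Proof.
split=> //.
- by move=> x y; rewrite /tarc in_set0.
- by move=> x y; rewrite /tarc in_set0.
- exact: set11.
- by move=> x; rewrite /tarc in_set0.
- by move=> x x' y; rewrite /tarc in_set0.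
- by move=> x; rewrite !inE.
- by move=> x; rewrite !inE orbF.
Qed.

Lemma stack_tree_connect (A : {set V * V}) u s y :
  path (fun a b => tarc A b a) u s -> y \in u :: s -> connect (tarc A) y u.
Proof.
elim: s u => [|w s IHs] u /=; first by move=> _; rewrite inE => /eqP ->.
case/andP=> wu ws; rewrite inE => /predU1P [-> //|ys].
exact: connect_trans (IHs w ws ys) (connect1 wu).
Qed.

Lemma tarc_subset (A B : {set V * V}) : A \subset B -> subrel (tarc A) (tarc B).
Proof. by move=> /subsetP AB x y; exact: AB. Qed.

Lemma dfs_push_inv u v s (vis : {set V}) (A : {set V * V}) fin :
  e u v -> v \notin vis -> dfs_inv (u :: s) vis A fin ->
  dfs_inv (v :: u :: s) (v |: vis) ((u, v) |: A) fin.
Proof.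
move=> uv v_new I.
have v_notin x : x \in vis -> x != v.
  by move=> xv; apply: contraNneq v_new => <-.
split; rewrite /tarc.
- by move=> x y /setU1P [[-> ->] //|]; exact: (dfs_tree_sub I).
- move=> x y /setU1P [[_ ->]|xy]; first exact: setU11.
  by rewrite in_setU1 (dfs_head_visited I xy) orbT.
- by rewrite in_setU1 (dfs_root_visited I) orbT.
- move=> x; rewrite in_setU1 negb_or (dfs_root_no_parent I) andbT.
  by apply/eqP => -[_ rv]; move: (v_notin _ (dfs_root_visited I)); rewrite rv eqxx.
- have head_old x y : (x, y) \in A -> y != v.
    by move=> xy; apply: v_notin (dfs_head_visited I xy).
  move=> x x' y /setU1P [[-> ->]|xy] /setU1P [|x'y].
  + by case=> ->.
  + by move: (head_old _ _ x'y); rewrite eqxx.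
  + by case=> _ yv; move: (head_old _ _ xy); rewrite yv eqxx.
  + exact: (dfs_parent_uniq I xy x'y).
- move=> x /predU1P [->|xs]; first exact: setU11.
  by rewrite in_setU1 (dfs_stack_visited I xs) orbT.
- by move=> x xf; rewrite in_setU1 (dfs_finished_visited I xf) orbT.
- move=> x /setU1P [->|xv]; first by rewrite mem_head.
  by rewrite in_cons; case/orP: (dfs_visited_stack_finished I xv) => ->; rewrite ?orbT.
- rewrite cons_uniq (dfs_stack_uniq I) andbT.
  by apply: contra v_new; exact: (dfs_stack_visited I).
- move=> x /predU1P [->|]; last exact: (dfs_stack_unfinished I).
  by apply: contra v_new; exact: (dfs_finished_visited I).
- rewrite /= setU11 /=; apply: sub_path (dfs_stack_tree_path I).
  by move=> a b; exact: (tarc_subset (subsetUr _ _)).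
- move=> x y xf xy; case: (dfs_finished_arc I xf xy) => [|yx]; [by left|right].
  apply: connect_sub yx => a b ab; apply: connect1.
  exact: (tarc_subset (subsetUr _ _)).
Qed.

(* Popping [u] is where the finishing order is extended: an out-neighbour of
   [u] is visited, hence either still on the stack (a tree ancestor of [u])
   or already finished. *)
Lemma dfs_pop_inv u s (vis : {set V}) (A : {set V * V}) fin :
  (forall v, e u v -> v \in vis) -> dfs_inv (u :: s) vis A fin ->
  dfs_inv s vis A (rcons fin u).
Proof.
move=> u_done I; have /andP [u_s s_uniq] := dfs_stack_uniq I.
have u_unfinished : u \notin fin by apply: (dfs_stack_unfinished I); rewrite mem_head.
split; try exact: (dfs_tree_sub I); try exact: (dfs_head_visited I);
  try exact: (dfs_root_visited I); try exact: (dfs_root_no_parent I);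
  try exact: (dfs_parent_uniq I).
- by move=> x xs; apply: (dfs_stack_visited I); rewrite in_cons xs orbT.
- move=> x; rewrite mem_rcons => /predU1P [->|]; last exact: (dfs_finished_visited I).
  by apply: (dfs_stack_visited I); rewrite mem_head.
- move=> x /(dfs_visited_stack_finished I); rewrite mem_rcons !in_cons.
  by case/orP=> [/orP [->|->]|->]; rewrite ?orbT.
- exact: s_uniq.
- move=> x xs; rewrite mem_rcons in_cons negb_or.
  rewrite (dfs_stack_unfinished I) ?in_cons ?xs ?orbT // andbT.
  by apply: contraNneq u_s => <-.
- exact: (path_sorted (dfs_stack_tree_path I)).
- move=> x y; rewrite -cats1 !index_cat mem_cat inE => /orP [xf|/eqP ->] xy.
    rewrite xf; case: (dfs_finished_arc I xf xy) => [yx|]; last by right.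
    have yf : y \in fin by rewrite -index_mem (ltn_trans yx) ?index_mem.
    by left; rewrite yf.
  rewrite (negbTE u_unfinished) /= eqxx addn0.
  case/orP: (dfs_visited_stack_finished I (u_done _ xy)) => y_in.
    by right; exact: stack_tree_connect (dfs_stack_tree_path I) y_in.
  by left; rewrite y_in index_mem.
Qed.

Lemma dfs_run_inv st st' fin :
  dfs_run e st st' -> dfs_inv st.1.1 st.1.2 st.2 fin ->
  exists fin', dfs_inv st'.1.1 st'.1.2 st'.2 fin'.
Proof.
move=> run; elim: run fin => [st0 fin I|st1 st2 st3 step _ IHrun fin I].
  by exists fin.
case: step IHrun I => [u v s vis A uv v_new|u s vis A u_done] IHrun /= I.
  exact: IHrun _ (dfs_push_inv uv v_new I).
exact: IHrun _ (dfs_pop_inv u_done I).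
Qed.

Lemma dfs_tree_inv A :
  dfs_tree e r A -> exists vis fin, dfs_inv [::] vis A fin.
Proof.
case=> vis run; exists vis.
exact: (dfs_run_inv run dfs_inv_init).
Qed.

Section FinishedSearch.
Variables (vis : {set V}) (A : {set V * V}) (fin : seq V).
Hypothesis I : dfs_inv [::] vis A fin.

Lemma in_level_finished u i : in_level A r u i -> u \in fin.
Proof.
case=> p [rp <- _].
have := path_last_visited (dfs_head_visited I) (dfs_root_visited I) rp.
by move/(dfs_visited_stack_finished I).
Qed.

Lemma dcycle_has_backward_arc c :
  dcycle e c -> {subset c <= fin} ->
  ~ {in c &, forall u v, ~ backward_arc e A u v}.
Proof.
case/and3P=> c_nil _ c_cyc c_fin no_back; case/eqP: c_nil.
have finish_decr : {in c &, subrel e (fun x y => index y fin < index x fin)}.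
  move=> x y xc yc xy; case: (dfs_finished_arc I (c_fin x xc) xy) => // yx.
  by case: (no_back x y xc yc).
exact: (cycle_decreasing_nil (sub_in_cycle finish_decr (allss c) c_cyc)).
Qed.

End FinishedSearch.
End DepthFirstSearch.

Theorem mainTheorem13 (V : finType) (e : rel V) (r : V) (g t : nat)
    (A : {set V * V})
    (Hloop : irreflexive e)
    (Hsc : strongly_connected e)
    (Hg : is_girth e g)
    (HT : dfs_tree e r A)
    (Ht : tree_length A t) :
  forall h : nat, h + g <= t + 2 ->
    (forall c : seq V, dcycle e c -> ~ (forall u, u \in c -> inW A r g h u)) /\
    (forall u v : V, backward_arc e A u v -> inW A r g h u -> inW A r g h v -> False).
Proof.
move=> h _; have [vis [fin I]] := dfs_tree_inv HT.
have no_back u v : backward_arc e A u v -> inW A r g h u -> inW A r g h v -> False.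
  exact: (inW_no_backward_arc Hloop (dfs_tree_sub I) (dfs_root_no_parent I)
            (dfs_parent_uniq I) Hg).
split=> // c cyc c_W; apply: (dcycle_has_backward_arc I cyc).
  by move=> u /c_W [i [_ lu]]; exact: (in_level_finished I lu).
by move=> u v uc vc uv; exact: no_back uv (c_W u uc) (c_W v vc).
Qed.
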